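(* Let $n \ge 1$, $p\in[0,1]$, $t \ge 0$, and $\gamma:\mathbb{N}^*\to[0,1]$ non-increasing. Let $p_i := \gamma(i)p$ for $i\ge1$ and $q_n := \prod_{i=1}^n (1-p_i)$. Then \[ \text{(a)}\quad q_n e^{t p_n (1-q_n)} + (1-q_n)e^{-t p_n q_n} \le \exp\left(\frac{p_n t^2}{4n}\right), \] \[ \text{(b)}\quad q_n e^{t p_n (q_n-1)} + (1-q_n)e^{t p_n q_n} \le \exp\left(\frac{p_n t^2}{4n}\right). \] *)

From Stdlib Require Import Reals.
Open Scope R_scope.

Fixpoint prod_1_to (f : nat -> R) (n : nat) : R :=
  match n with
  | O => 1
  | S m => prod_1_to f m * f (S m)
  end.

Definition p_seq (gamma : nat -> R) (p : R) (i : nat) : R := gamma i * p.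

Definition q_seq (gamma : nat -> R) (p : R) (n : nat) : R :=
  prod_1_to (fun i => 1 - p_seq gamma p i) n.

From Stdlib Require Import Reals Lra Psatz.
From Coquelicot Require Import Coquelicot.
Open Scope R_scope.

(* Let [Z = 1 - q + q e^s] and [r = q e^s / Z] (the exponentially tilted
   Bernoulli parameter).  Gibbs' identity gives
   [ln (q e^(s(1-q)) + (1-q) e^(-sq)) = s (r - q) - KL(r || q)], and the key
   inequality [KL(r || u) >= (r - u)^2 ln (1/u)] turns this into
   [s (r - q) - L (r - q)^2 <= s^2 / (4 L)] whenever [L <= ln (1/q)].
   Since [gamma] is non-increasing, every factor of [q_n] is at most [1 - p_n],
   so [q_n <= (1 - p_n)^n <= exp (- n p_n)] and one can take [L = n p_n] with
   [s = t p_n] for (a) and [s = - t p_n] for (b). *)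

Lemma ln_le_sub1 x : 0 < x -> ln x <= x - 1.
Proof.
  intros Hx. pose proof (exp_ineq1_le (ln x)) as H. rewrite exp_ln in H; lra.
Qed.

Lemma one_sub_inv_le_ln x : 0 < x -> 1 - / x <= ln x.
Proof.
  intros Hx. pose proof (ln_le_sub1 (/ x) (Rinv_0_lt_compat _ Hx)) as H.
  rewrite ln_Rinv in H; lra.
Qed.

Lemma xlnx_ge_sub1 x : 0 < x -> x - 1 <= x * ln x.
Proof.
  intros Hx. pose proof (one_sub_inv_le_ln x Hx).
  assert (x * / x = 1) by (field; lra). nra.
Qed.

Lemma ln_le_half x : 0 < x -> ln x <= x / 2.
Proof.
  intros Hx. pose proof (sqrt_lt_R0 x Hx) as Hs.
  pose proof (sqrt_sqrt x (Rlt_le _ _ Hx)) as Hss.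
  assert (E : ln x = 2 * ln (sqrt x)).
  { rewrite <- Hss at 1. rewrite ln_mult by lra. ring. }
  pose proof (ln_le_sub1 _ Hs). pose proof (pow2_ge_0 (sqrt x - 2)).
  set (v := sqrt x) in *. rewrite E, <- Hss. nra.
Qed.

Lemma exp_ge_taylor2 x : 0 <= x -> 1 + x + x ^ 2 / 2 <= exp x.
Proof.
  intros Hx. destruct (Req_dec x 0) as [->|Hx0].
  { rewrite exp_0. lra. }
  assert (Hd : forall c, 0 <= c <= x ->
    derivable_pt_lim (fun y => exp y - 1 - y - y ^ 2 / 2) c (exp c - 1 - c)).
  { intros c _. apply is_derive_Reals. auto_derive; [easy | field]. }
  destruct (MVT_cor2 _ _ 0 x ltac:(lra) Hd) as [c [Hc _]].
  simpl in Hc. rewrite exp_0 in Hc. pose proof (exp_ineq1_le c). nra.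
Qed.

(* Uses [exp x = exp (x/4)^4] and the quadratic lower bound at [x/4]. *)
Lemma mul_double_sub1_le_exp x : 0 <= x -> x * (2 * x - 1) <= exp x.
Proof.
  intros Hx.
  assert (E : exp x = (exp (x / 4) * exp (x / 4)) * (exp (x / 4) * exp (x / 4))).
  { rewrite <- !exp_plus. f_equal. field. }
  pose proof (exp_ge_taylor2 (x / 4) ltac:(lra)).
  set (e := exp (x / 4)) in *. set (y := 1 + x / 4 + (x / 4) ^ 2 / 2) in *.
  assert (Hy : 0 <= y) by (unfold y; nra).
  assert (Hyy : y * y <= e * e) by (apply Rmult_le_compat; lra).
  assert ((y * y) * (y * y) <= (e * e) * (e * e)) by (apply Rmult_le_compat; nra).
  rewrite E. apply Rle_trans with ((y * y) * (y * y)); [unfold y | lra].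
  pose proof (Rmult_le_pos _ _ Hx (pow2_ge_0 (x - 3))).
  pose proof (pow2_ge_0 (x * x - 6)). nra.
Qed.

Lemma exp_le x y : x <= y -> exp x <= exp y.
Proof.
  intros [Hlt | ->]; [left; apply exp_increasing; exact Hlt | lra].
Qed.

Lemma pow_le_exp_mul x y (m : nat) : 0 <= x -> x <= exp y -> x ^ m <= exp (INR m * y).
Proof.
  intros Hx0 Hxy. induction m as [|m IH].
  - simpl. rewrite Rmult_0_l, exp_0. lra.
  - rewrite S_INR. replace ((INR m + 1) * y) with (y + INR m * y) by ring.
    rewrite exp_plus. simpl. apply Rmult_le_compat; auto using pow_le.
Qed.

Lemma inv_le_inv_mul_one_sub u : 0 < u < 1 -> / u <= 1 / (u * (1 - u)).
Proof.
  intros Hu. unfold Rdiv. rewrite Rmult_1_l, Rinv_mult.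
  assert (1 <= / (1 - u)) by (rewrite <- Rinv_1; apply Rinv_le_contravar; lra).
  pose proof (Rinv_0_lt_compat u ltac:(lra)). nra.
Qed.

Lemma derivative_neg_lt_right f a b l :
  derivable_pt_lim f a l -> l < 0 -> a < b -> exists x, a < x < b /\ f x < f a.
Proof.
  intros Hd Hl Hab.
  destruct (Hd (- l / 2) ltac:(lra)) as [delta Hdelta].
  pose proof (cond_pos delta).
  set (h := Rmin (delta / 2) ((b - a) / 2)).
  assert (Hh0 : 0 < h) by (apply Rmin_glb_lt; lra).
  assert (Hh1 : h <= delta / 2) by apply Rmin_l.
  assert (Hh2 : h <= (b - a) / 2) by apply Rmin_r.
  assert (Habs : Rabs h < delta) by (rewrite Rabs_right; lra).
  destruct (Rabs_def2 _ _ (Hdelta h ltac:(lra) Habs)) as [Hq _].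
  exists (a + h). split; [lra |].
  assert (f (a + h) - f a = ((f (a + h) - f a) / h) * h) by (field; lra).
  nra.
Qed.

(* [KL(r || u) - (r - u)^2 ln (1/u)] for Bernoulli parameters [r] and [u]. *)
Definition kl_excess (r u : R) : R :=
  r * ln r - r * ln u + (1 - r) * ln (1 - r) - (1 - r) * ln (1 - u) + (r - u) ^ 2 * ln u.

Definition kl_excess_slope (r u : R) : R :=
  1 / (u * (1 - u)) + 1 - r / u + 2 * ln u.

Lemma kl_excess_derivative r u :
  0 < u < 1 -> derivable_pt_lim (kl_excess r) u ((u - r) * kl_excess_slope r u).
Proof.
  intros Hu. apply is_derive_Reals. unfold kl_excess, kl_excess_slope.
  auto_derive.
  - repeat split; lra.
  - field. lra.
Qed.

Lemma kl_excess_diag r : kl_excess r r = 0.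
Proof. unfold kl_excess. replace (r - r) with 0 by ring. ring. Qed.

Lemma kl_excess_slope_nonneg r u : 0 < r -> r <= u < 1 -> 0 <= kl_excess_slope r u.
Proof.
  intros Hr Hu. unfold kl_excess_slope.
  pose proof (inv_le_inv_mul_one_sub u ltac:(lra)).
  pose proof (ln_le_half (/ u) (Rinv_0_lt_compat u ltac:(lra))) as Hln.
  rewrite ln_Rinv in Hln by lra.
  assert (r / u <= 1).
  { apply Rle_trans with (u * / u); [apply Rmult_le_compat_r |];
      [left; apply Rinv_0_lt_compat | | rewrite Rinv_r]; lra. }
  lra.
Qed.

Lemma kl_excess_slope_pos_near0 r u :
  0 < r < 1 -> 0 < u -> u <= ((1 - r) / 4) ^ 2 -> 0 < kl_excess_slope r u.
Proof.
  intros Hr Hu Hle. unfold kl_excess_slope.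
  pose proof (sqrt_lt_R0 u Hu) as Hv.
  pose proof (sqrt_sqrt u (Rlt_le _ _ Hu)) as Hvv.
  set (v := sqrt u) in *.
  assert (Hvle : v <= (1 - r) / 4).
  { unfold v. rewrite <- (sqrt_pow2 ((1 - r) / 4)) by lra. apply sqrt_le_1; lra. }
  pose proof (inv_le_inv_mul_one_sub u ltac:(nra)).
  assert (Eln : ln u = 2 * ln v) by (rewrite <- Hvv, ln_mult by lra; ring).
  pose proof (one_sub_inv_le_ln v Hv).
  set (w := / v) in *.
  assert (Hw0 : 0 < w) by (apply Rinv_0_lt_compat; lra).
  assert (Hwv : w * v = 1) by (unfold w; field; lra).
  assert (Hinv : / u = w * w) by (unfold w; rewrite <- Hvv, Rinv_mult; reflexivity).
  assert (Hw4 : 4 <= (1 - r) * w) by nra.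
  assert (Hru : r / u = r * (w * w)) by (unfold Rdiv; rewrite Hinv; ring).
  rewrite Hinv in *. rewrite Hru, Eln. nra.
Qed.

(* At a critical point [c < r], put [L = ln (1/c)] and [k = (1 - r)/c]: the
   equation [kl_excess_slope r c = 0] reads [k + 1 = 2L - 1/(1 - c) <= 2L - 1],
   and [L (2L - 1) <= e^L = 1/c] then controls the only negative term. *)
Lemma kl_excess_nonneg_critical r c :
  0 < c -> c < r -> r < 1 -> kl_excess_slope r c = 0 -> 0 <= kl_excess r c.
Proof.
  intros Hc Hcr Hr Hslope.
  assert (Hlc : ln c < 0) by (rewrite <- ln_1; apply ln_increasing; lra).
  set (L := - ln c).
  set (k := (1 - r) / c).
  assert (Hk0 : 0 < k) by (apply Rdiv_lt_0_compat; lra).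
  assert (Hck : 1 - r = c * k) by (unfold k; field; lra).
  assert (Hk : k + 1 <= 2 * L - 1).
  { unfold kl_excess_slope in Hslope.
    assert (k = 1 / c - r / c) by (unfold k; field; lra).
    assert (1 / c - 1 / (c * (1 - c)) = - (1 / (1 - c))) by (field; lra).
    assert (1 <= 1 / (1 - c)).
    { unfold Rdiv. rewrite Rmult_1_l, <- Rinv_1. apply Rinv_le_contravar; lra. }
    unfold L. lra. }
  assert (HLc : L * c * (2 * L - 1) <= 1).
  { pose proof (mul_double_sub1_le_exp L ltac:(unfold L; lra)) as H.
    unfold L at 3 in H. rewrite exp_Ropp, exp_ln in H by lra.
    assert (c * / c = 1) by (field; lra). nra. }
  assert (Hquad : 0 <= 2 * L - 1 - L * c * (k + 1) * (k + 1)).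
  { assert (L * c * (k + 1) <= 1).
    { apply Rle_trans with (L * c * (2 * L - 1)); [apply Rmult_le_compat_l |]; nra. }
    nra. }
  assert (Hr_ln : r - 1 <= r * ln r) by (apply xlnx_ge_sub1; lra).
  assert (Hk_ln : k - 1 <= k * ln k) by (apply xlnx_ge_sub1; lra).
  assert (Hl1c : 0 <= - (c * k * ln (1 - c))).
  { pose proof (ln_le_sub1 (1 - c) ltac:(lra)). assert (0 <= c * k) by nra. nra. }
  assert (E : kl_excess r c =
            (r * ln r - (r - 1)) + c * (k * ln k - (k - 1)) - c * k * ln (1 - c)
            + c * (2 * L - 1 - L * c * (k + 1) * (k + 1))).
  { unfold kl_excess. rewrite Hck, ln_mult by lra. replace r with (1 - c * k) by lra.
    unfold L. ring. }
  rewrite E. assert (0 <= c * (k * ln k - (k - 1))) by nra. nra.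
Qed.

(* For [r < q] the minimum of [kl_excess r] on [[a, r]] (with [a] so small that
   the slope is positive there) is either at [r], or at an interior critical
   point; it cannot be at [a] since the function decreases there. *)
Lemma kl_excess_nonneg r q : 0 < r < 1 -> 0 < q < 1 -> 0 <= kl_excess r q.
Proof.
  intros Hr Hq.
  destruct (Rle_or_lt r q) as [Hrq | Hqr].
  - destruct (Req_dec q r) as [-> | Hne]; [rewrite kl_excess_diag; lra |].
    assert (Hd : forall c, r <= c <= q ->
      derivable_pt_lim (kl_excess r) c ((fun u => (u - r) * kl_excess_slope r u) c)).
    { intros c Hc. apply kl_excess_derivative. lra. }
    destruct (MVT_cor2 _ _ r q ltac:(lra) Hd) as [c [Hc1 Hc2]].
    rewrite kl_excess_diag in Hc1.
    pose proof (kl_excess_slope_nonneg r c ltac:(lra) ltac:(lra)).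
    assert (0 <= (c - r) * kl_excess_slope r c * (q - r)).
    { apply Rmult_le_pos; [apply Rmult_le_pos |]; lra. }
    lra.
  - set (a := Rmin q (((1 - r) / 4) ^ 2)).
    assert (Ha0 : 0 < a) by (apply Rmin_glb_lt; [| apply pow_lt]; lra).
    assert (Haq : a <= q) by apply Rmin_l.
    assert (Hslope_a : 0 < kl_excess_slope r a)
      by (apply kl_excess_slope_pos_near0; [| | apply Rmin_r]; lra).
    assert (Hcont : forall c, a <= c <= r -> continuity_pt (kl_excess r) c).
    { intros c Hc. apply derivable_continuous_pt.
      exists ((c - r) * kl_excess_slope r c). apply kl_excess_derivative. lra. }
    destruct (continuity_ab_min (kl_excess r) a r ltac:(lra) Hcont) as [m [Hmin Hm]].
    enough (0 <= kl_excess r m) by (pose proof (Hmin q ltac:(lra)); lra).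
    destruct (Req_dec m r) as [-> | Hmr]; [rewrite kl_excess_diag; lra |].
    destruct (Req_dec m a) as [-> | Hma].
    + exfalso.
      destruct (derivative_neg_lt_right (kl_excess r) a r _
                  (kl_excess_derivative r a ltac:(lra)) ltac:(nra) ltac:(lra))
        as [x [Hx1 Hx2]].
      pose proof (Hmin x ltac:(lra)). lra.
    + set (pr := exist _ _ (kl_excess_derivative r m ltac:(lra))
                 : derivable_pt (kl_excess r) m).
      pose proof (deriv_minimum (kl_excess r) a r m pr ltac:(lra) ltac:(lra)
                    (fun x h1 h2 => Hmin x (conj (Rlt_le _ _ h1) (Rlt_le _ _ h2)))) as HD.
      unfold pr, derive_pt in HD. simpl in HD.
      apply Rmult_integral in HD. destruct HD as [HD | HD]; [lra |].
      apply kl_excess_nonneg_critical; lra.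
Qed.

Lemma centered_bernoulli_log_mgf_le q s L :
  0 < q < 1 -> 0 < L -> L <= - ln q ->
  ln (1 - q + q * exp s) - s * q <= s ^ 2 / (4 * L).
Proof.
  intros Hq HL HLq.
  pose proof (exp_pos s).
  set (Z := 1 - q + q * exp s).
  assert (HZ : 0 < Z) by (unfold Z; nra).
  set (r := q * exp s / Z).
  assert (Hr0 : 0 < r) by (apply Rdiv_lt_0_compat; nra).
  assert (H1r : 1 - r = (1 - q) / Z) by (unfold r; field_simplify_eq; [unfold Z; ring | lra]).
  assert (Hr1 : r < 1) by (pose proof (Rdiv_lt_0_compat (1 - q) Z ltac:(lra) HZ); lra).
  assert (Hgibbs : kl_excess r q = r * s - ln Z + (r - q) ^ 2 * ln q).
  { assert (Hlr : ln r = ln q + s - ln Z).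
    { unfold r, Rdiv. rewrite !ln_mult, ln_exp, ln_Rinv;
        try apply Rinv_0_lt_compat; try nra. }
    assert (Hl1r : ln (1 - r) = ln (1 - q) - ln Z).
    { rewrite H1r. unfold Rdiv. rewrite ln_mult, ln_Rinv;
        try apply Rinv_0_lt_compat; lra. }
    unfold kl_excess. rewrite Hlr, Hl1r. ring. }
  pose proof (kl_excess_nonneg r q (conj Hr0 Hr1) Hq).
  assert ((r - q) ^ 2 * ln q <= - L * (r - q) ^ 2) by (pose proof (pow2_ge_0 (r - q)); nra).
  assert (Hamgm : s ^ 2 / (4 * L) - (s * (r - q) - L * (r - q) ^ 2)
                  = (s - 2 * L * (r - q)) ^ 2 / (4 * L)) by (field; lra).
  pose proof (Rdiv_le_0_compat _ (4 * L) (pow2_ge_0 (s - 2 * L * (r - q))) ltac:(lra)).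
  lra.
Qed.

Lemma centered_bernoulli_mgf_le q s L :
  0 <= q -> 0 < L -> q <= exp (- L) ->
  q * exp (s * (1 - q)) + (1 - q) * exp (- (s * q)) <= exp (s ^ 2 / (4 * L)).
Proof.
  intros Hq0 HL HqL.
  pose proof (Rdiv_le_0_compat _ (4 * L) (pow2_ge_0 s) ltac:(lra)) as Hrhs.
  destruct (Req_dec q 0) as [-> | Hq].
  { replace (- (s * 0)) with 0 by ring. rewrite exp_0.
    pose proof (exp_le _ _ Hrhs). rewrite exp_0 in *. lra. }
  assert (Hq1 : q < 1).
  { pose proof (exp_increasing (- L) 0 ltac:(lra)). rewrite exp_0 in *. lra. }
  assert (HLq : L <= - ln q).
  { destruct HqL as [Hlt | ->].
    - pose proof (ln_increasing q _ ltac:(lra) Hlt). rewrite ln_exp in *. lra.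
    - rewrite ln_exp. lra. }
  assert (E : q * exp (s * (1 - q)) + (1 - q) * exp (- (s * q))
              = exp (ln (1 - q + q * exp s) - s * q)).
  { unfold Rminus at 3. rewrite exp_plus, exp_ln by (pose proof (exp_pos s); nra).
    replace (s * (1 - q)) with (s + - (s * q)) by ring. rewrite exp_plus. ring. }
  rewrite E. apply exp_le, centered_bernoulli_log_mgf_le; lra.
Qed.

Lemma q_seq_le_exp (n : nat) (p : R) (gamma : nat -> R) :
  (1 <= n)%nat -> 0 <= p -> p <= 1 ->
  (forall i, (1 <= i)%nat -> 0 <= gamma i <= 1) ->
  (forall i j, (1 <= i)%nat -> (i <= j)%nat -> gamma j <= gamma i) ->
  0 <= q_seq gamma p n <= exp (- (INR n * p_seq gamma p n)).
Proof.
  intros Hn Hp0 Hp1 Hg Hgmono.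
  set (pn := p_seq gamma p n).
  assert (Hfactor : forall i, (1 <= i <= n)%nat -> 0 <= 1 - p_seq gamma p i <= 1 - pn).
  { intros i Hi. unfold pn, p_seq.
    pose proof (Hg i ltac:(lia)). pose proof (Hgmono i n ltac:(lia) ltac:(lia)). nra. }
  assert (Hprod : forall m, (m <= n)%nat ->
            0 <= prod_1_to (fun i => 1 - p_seq gamma p i) m <= (1 - pn) ^ m).
  { induction m as [|m IH]; intros Hm; simpl; [lra |].
    destruct (IH ltac:(lia)). destruct (Hfactor (S m) ltac:(lia)).
    split; [apply Rmult_le_pos | rewrite Rmult_comm; apply Rmult_le_compat]; lra. }
  destruct (Hprod n (le_n n)) as [Hq0 Hqn].
  assert (Hpn : 0 <= pn <= 1) by (unfold pn, p_seq; pose proof (Hg n Hn); nra).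
  pose proof (pow_le_exp_mul (1 - pn) (- pn) n ltac:(lra)
                ltac:(pose proof (exp_ineq1_le (- pn)); lra)).
  unfold q_seq. replace (- (INR n * pn)) with (INR n * - pn) by ring. lra.
Qed.

Theorem mainTheorem7 (n : nat) (p t : R) (gamma : nat -> R)
  (Hn : (1 <= n)%nat)
  (Hp0 : 0 <= p) (Hp1 : p <= 1)
  (Ht : 0 <= t)
  (Hg0 : forall i : nat, (1 <= i)%nat -> 0 <= gamma i)
  (Hg1 : forall i : nat, (1 <= i)%nat -> gamma i <= 1)
  (Hgmono : forall i j : nat, (1 <= i)%nat -> (i <= j)%nat -> gamma j <= gamma i) :
  let pn := p_seq gamma p n in
  let qn := q_seq gamma p n in
  qn * exp (t * pn * (1 - qn)) + (1 - qn) * exp (- (t * pn * qn))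
    <= exp (pn * t ^ 2 / (4 * INR n))
  /\
  qn * exp (t * pn * (qn - 1)) + (1 - qn) * exp (t * pn * qn)
    <= exp (pn * t ^ 2 / (4 * INR n)).
Proof.
  intros pn qn.
  assert (Hq : 0 <= qn <= exp (- (INR n * pn))).
  { apply q_seq_le_exp; auto. }
  assert (HnR : 0 < INR n) by (apply lt_0_INR; lia).
  assert (Hpn : 0 <= pn) by (apply Rmult_le_pos; auto).
  destruct (Req_dec pn 0) as [Hpn0 | Hpn0].
  { rewrite Hpn0. rewrite !Rmult_0_r, !Rmult_0_l, Ropp_0, Rdiv_0_l, exp_0. lra. }
  set (L := INR n * pn) in Hq.
  assert (HL : 0 < L) by (unfold L; nra).
  assert (Hrhs : pn * t ^ 2 / (4 * INR n) = (t * pn) ^ 2 / (4 * L))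
    by (unfold L; field; lra).
  rewrite Hrhs. split.
  - apply centered_bernoulli_mgf_le; lra.
  - replace ((t * pn) ^ 2) with ((- (t * pn)) ^ 2) by ring.
    replace (t * pn * (qn - 1)) with (- (t * pn) * (1 - qn)) by ring.
    replace (t * pn * qn) with (- (- (t * pn) * qn)) by ring.
    apply centered_bernoulli_mgf_le; lra.
Qed.
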